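(* Let $C_{sp}(E)$ be as in the context, let $\Delta_n\ge0$ be constants and $c_n$ bounded functions, $n\in\mathbb{N}_0$, and let $T_n:C_{sp}(E)\to C_{sp}(E)$ be operators such that (i) $\|T_nv_1-T_nv_2\|_{sp}\le\Delta_n\|v_1-v_2\|_{sp}$ for all $v_1,v_2\in C_{sp}(E)$; (ii) $\|T_n0\|_{sp}\le\|c_n\|_{sp}$; (iii) for each $n$, $\lim_{k\to\infty}\Delta_n\Delta_{n+1}\cdots\Delta_{n+k}=0$; (iv) $R_n:=\|c_n\|_{sp}+\sum_{i=0}^\infty\Delta_n\cdots\Delta_{n+i}\|c_{n+i+1}\|_{sp}<\infty$ for each $n$. Then there is a sequence $w_n\in C_{sp}(E)$ with $\|T_nw_{n+1}-w_n\|_{sp}=0$ for $n=0,1,\ldots$. Moreover $\|w_n\|_{sp}\le R_n$ and for all $n$ and $k\ge1$ $$\|T_nT_{n+1}\cdots T_{n+k-1}0-w_n\|_{sp}\le\Delta_n\cdots\Delta_{n+k-1}\|w_{n+k}\|_{sp}.$$ Furthermore, when $\sup_n\|w_n\|_{sp}<\infty$, the $w_n$ are unique up to an additive constant, in the sense that any sequence $\tilde w_n\in C_{sp}(E)$ with $\|T_n\tilde w_{n+1}-\tilde w_n\|_{sp}=0$ for all $n$ and $\sup_n\|\tilde w_n\|_{sp}<\infty$ satisfies $\|\tilde w_n-w_n\|_{sp}=0$ for all $n$.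
   Context: $E$ is a complete separable metric space, $U$ a set, $C(E)$ the bounded continuous real functions on $E$. The span seminorm is $\|v\|_{sp}=\sup_{x,x'\in E}(v(x)-v(x'))$; $C_{sp}(E)$ is the quotient of $C(E)$ by the relation $v_1\equiv v_2$ iff $\|v_1-v_2\|_{sp}=0$ (i.e. modulo constants), normed by $\|\cdot\|_{sp}$. For a bounded $c_n:E\times U\to\mathbb{R}$, $\|c_n\|_{sp}=\sup_{x,x'\in E}\sup_{a,a'\in U}(c_n(x,a)-c_n(x',a'))$. *)

From HB Require Import structures.
From mathcomp Require Import all_boot all_order all_algebra.
From mathcomp Require Import all_classical all_reals all_analysis.
Set Implicit Arguments. Unset Strict Implicit. Unset Printing Implicit Defensive.
Import Order.TTheory GRing.Theory Num.Theory numFieldNormedType.Exports.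
Local Open Scope classical_set_scope.
Local Open Scope ring_scope.

Definition separable_sp (T : topologicalType) : Prop :=
  exists D : set T, countable D /\ closure D = setT.

Definition inCb (R : realType) (E : topologicalType) (v : E -> R) : Prop :=
  continuous v /\ exists M : R, forall x, `|v x| <= M.

Definition spn (R : realType) (E : Type) (v : E -> R) : R :=
  sup [set v x - v x' | x in [set: E] & x' in [set: E]].

Definition spc (R : realType) (E U : Type) (c : E -> U -> R) : R :=
  sup [set c p.1.1 p.2.1 - c p.1.2 p.2.2 | p in [set: (E * E) * (U * U)]].

Definition dprod (R : realType) (Delta : nat -> R) (n k : nat) : R :=
  \prod_(n <= j < n + k) Delta j.

Fixpoint iterT (R : realType) (E : Type) (T : nat -> (E -> R) -> (E -> R))
  (n k : nat) (v : E -> R) : E -> R :=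
  match k with
  | 0 => v
  | k'.+1 => T n (iterT T n.+1 k' v)
  end.

From HB Require Import structures.
From mathcomp Require Import all_boot all_order all_algebra.
From mathcomp Require Import all_classical all_reals all_analysis.
From mathcomp Require Import ring lra.
Import Order.TTheory GRing.Theory Num.Theory numFieldNormedType.Exports.
Local Open Scope classical_set_scope.
Local Open Scope ring_scope.
Set Implicit Arguments. Unset Strict Implicit.

(* Let u_(n,k) = T_n ... T_(n+k-1) 0.  The Lipschitz bounds give
   ||u_(n,k+1) - u_(n,k)||_sp <= Delta_n ... Delta_(n+k-1) ||c_(n+k)||_sp, a summable
   sequence, so once the u_(n,k) are normalised to vanish at a base point they converge
   uniformly to a bounded continuous w_n, and letting k -> oo in u_(n,k+1) = T_n u_(n+1,k)
   yields ||T_n w_(n+1) - w_n||_sp = 0.  Iterating the Lipschitz bound along any solution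
   gives the error estimate; applied to two bounded solutions at depth k, with
   Delta_n ... Delta_(n+k) -> 0, it gives uniqueness. *)

Section span_seminorm.
Variables (R : realType) (E : Type).
Implicit Types f g h : E -> R.

Definition bounded f := exists M : R, forall x, `|f x| <= M.

Lemma boundedB f g : bounded f -> bounded g -> bounded (f \- g).
Proof.
move=> [M fM] [N gN]; exists (M + N) => x.
by rewrite (le_trans (ler_normB _ _)) ?lerD.
Qed.

Lemma spn_void f : ~ (exists x : E, True) -> spn f = 0.
Proof.
move=> E0; rewrite /spn (_ : [set _ | _ in _ & _ in _] = set0) ?sup0 //.
by apply/seteqP; split => // r [x]; case: E0; exists x.
Qed.

Lemma spn_ge_sub f x x' : bounded f -> f x - f x' <= spn f.
Proof.
move=> [M fM]; apply: ub_le_sup; last by exists x => //; exists x'.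
exists (M + M) => _ [y _ [y' _ <-]].
by rewrite (le_trans (ler_norm _)) // (le_trans (ler_normB _ _)) ?lerD.
Qed.

Lemma spn_le f B : 0 <= B -> (forall x x', f x - f x' <= B) -> spn f <= B.
Proof.
move=> B_ge0 fB; have [[x _]|E0] := pselect (exists x : E, True).
  apply: ge_sup; first by exists (f x - f x); exists x => //; exists x.
  by move=> _ [y _ [y' _ <-]].
by rewrite spn_void.
Qed.

Lemma spn_ge0 f : bounded f -> 0 <= spn f.
Proof.
move=> bf; have [[x _]|E0] := pselect (exists x : E, True).
  by rewrite -(subrr (f x)) spn_ge_sub.
by rewrite spn_void.
Qed.

Lemma normB_le_spn f x x' : bounded f -> `|f x - f x'| <= spn f.
Proof.
by move=> bf; rewrite ler_norml lerNl opprB !spn_ge_sub.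
Qed.

Lemma spn_const f : (forall x x', f x = f x') -> spn f = 0.
Proof.
move=> fC; have [[x0 _]|E0] := pselect (exists x : E, True); last exact: spn_void.
apply/le_anti; rewrite spn_le => [|//|x x']; last by rewrite (fC x x') subrr.
by rewrite spn_ge0 //; exists `|f x0| => x; rewrite (fC x x0).
Qed.

Lemma spnD f g : bounded f -> bounded g -> spn (f \+ g) <= spn f + spn g.
Proof.
move=> bf bg; apply: spn_le => [|x x' /=]; first by rewrite addr_ge0 ?spn_ge0.
by rewrite opprD addrACA lerD ?spn_ge_sub.
Qed.

Lemma spnBC f g : spn (f \- g) = spn (g \- f).
Proof.
rewrite /spn; congr sup.
by apply/seteqP; split => _ [x _ [x' _ <-]]; exists x' => //; exists x => //=; ring.
Qed.

Lemma spnB f g : bounded f -> bounded g -> spn (f \- g) <= spn f + spn g.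
Proof.
move=> bf bg; apply: spn_le => [|x x' /=]; first by rewrite addr_ge0 ?spn_ge0.
have -> : f x - g x - (f x' - g x') = (f x - f x') + (g x' - g x) by ring.
by rewrite lerD ?spn_ge_sub.
Qed.

Lemma spn_subr0 f : spn (f \- (fun=> 0)) = spn f.
Proof. by congr spn; apply/funext => x /=; rewrite subr0. Qed.

Lemma spn_triangle f g h : bounded f -> bounded g -> bounded h ->
  spn (f \- h) <= spn (f \- g) + spn (g \- h).
Proof.
move=> bf bg bh; rewrite (_ : f \- h = (f \- g) \+ (g \- h)).
  by apply: spnD; exact: boundedB.
by apply/funext => x /=; rewrite addrA subrK.
Qed.

Lemma spn_le_subD f g : bounded f -> bounded g -> spn f <= spn (f \- g) + spn g.
Proof.
move=> bf bg; have -> : spn f = spn ((f \- g) \+ g).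
  by congr spn; apply/funext => x /=; rewrite subrK.
by apply: spnD => //; exact: boundedB.
Qed.

End span_seminorm.

Lemma cvg_series_recl (R : realType) (f : R^nat) (l : R) :
  series (fun i => f i.+1) @ \oo --> l -> series f @ \oo --> f 0%N + l.
Proof.
move=> fl; rewrite -cvg_shiftS.
have -> : [sequence series f n.+1]_n = fun n => f 0%N + series (fun i => f i.+1) n.
  by apply/funext => n; rewrite /series /= big_nat_recl.
by apply: cvgD => //; exact: cvg_cst.
Qed.

Section summable_increments.
Variables (R : realType) (a b : R^nat).
Hypothesis a_incr : forall j, `|a j.+1 - a j| <= b j.
Hypothesis b_sum : cvgn (series b).

Lemma cvg_summable_increments : cvgn a.
Proof.
have -> : a = fun n => a 0%N + series (telescope a) n.
  by apply/funext => n; exact: eq_sum_telescope.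
apply: is_cvgD; first exact: is_cvg_cst.
apply: normed_cvg; apply: (series_le_cvg _ _ a_incr b_sum) => // j.
exact: le_trans (a_incr j).
Qed.

Lemma lim_sub_le_tail k : `|limn a - a k| <= limn (series b) - series b k.
Proof.
have lim_a : (fun m => `|a m - a k|) @ \oo --> `|limn a - a k|.
  by apply: cvg_norm; apply: cvgB; [exact: cvg_summable_increments | exact: cvg_cst].
have lim_b : (fun m => series b m - series b k) @ \oo --> limn (series b) - series b k.
  by apply: cvgB => //; exact: cvg_cst.
apply: ler_cvg_to lim_a lim_b _; near=> m.
have km : (k <= m)%N by near: m; exact: nbhs_infty_ge.
rewrite sub_series_geq // -telescope_sumr //.
by rewrite (le_trans (ler_norm_sum _ _ _)) // ler_sum.
Unshelve. all: by end_near.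
Qed.

End summable_increments.

Lemma continuous_unif_approx (R : realType) (E : topologicalType)
    (f : E -> R) (g : nat -> E -> R) (e : R^nat) :
  (forall k, continuous (g k)) -> (forall k x, `|f x - g k x| <= e k) ->
  e @ \oo --> 0 -> continuous f.
Proof.
move=> g_cont fg e0 x; apply/cvgrPdist_lt => eps eps_gt0.
have eps3 : 0 < eps / 3 by rewrite divr_gt0.
have [k _ ek] := (cvgrPdist_lt _ _).1 e0 _ eps3.
have {ek} := ek k (leqnn k); rewrite sub0r normrN => /(le_lt_trans (ler_norm _)) ek.
have gk_near := (cvgrPdist_lt _ _).1 (g_cont k x) _ eps3.
near=> y; have gxy : `|g k x - g k y| < eps / 3 by near: y; exact: gk_near.
have := fg k x; have := fg k y; move: gxy.
rewrite !ltr_norml !ler_norml => /andP[? ?] /andP[? ?] /andP[? ?].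
apply/andP; split; lra.
Unshelve. all: by end_near.
Qed.

Lemma inCb_bounded (R : realType) (E : topologicalType) (v : E -> R) :
  inCb v -> bounded v.
Proof. by case. Qed.

Lemma inCb0 (R : realType) (E : topologicalType) : inCb (fun _ : E => 0 : R).
Proof. by split; [exact: cst_continuous | exists 0 => x; rewrite normr0]. Qed.

Section dprod.
Variables (R : realType) (Delta : nat -> R).

Lemma dprod0 n : dprod Delta n 0 = 1.
Proof. by rewrite /dprod addn0 big_geq. Qed.

Lemma dprodS n k : dprod Delta n k.+1 = Delta n * dprod Delta n.+1 k.
Proof. by rewrite /dprod big_ltn ?addnS ?ltnS ?leq_addr // addSn. Qed.

Lemma dprod_ge0 n k : (forall j, 0 <= Delta j) -> 0 <= dprod Delta n k.
Proof. by move=> Delta_ge0; apply: prodr_ge0. Qed.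

End dprod.

Section lipschitz_chain.
Variables (R : realType) (E : topologicalType).
Variables (Delta : nat -> R) (T : nat -> (E -> R) -> E -> R).
Hypothesis Delta_ge0 : forall n, 0 <= Delta n.
Hypothesis T_inCb : forall n v, inCb v -> inCb (T n v).
Hypothesis T_lipschitz : forall n v1 v2, inCb v1 -> inCb v2 ->
  spn (T n v1 \- T n v2) <= Delta n * spn (v1 \- v2).

Lemma inCb_iterT v n k : inCb v -> inCb (iterT T n k v).
Proof. by move=> v_inCb; elim: k n => [|k IHk] n //=; apply: T_inCb. Qed.

Definition solution (w : nat -> E -> R) :=
  (forall n, inCb (w n)) /\ forall n, spn (T n (w n.+1) \- w n) = 0.

Lemma spn_iterT_sub_solution w v k n : solution w -> inCb v ->
  spn (iterT T n k v \- w n) <= dprod Delta n k * spn (v \- w (n + k)%N).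
Proof.
move=> [w_inCb w_eq] v_inCb; elim: k n => [|k IHk] n.
  by rewrite dprod0 mul1r addn0.
have bT u : inCb u -> bounded (T n u) by move=> /(T_inCb n)/inCb_bounded.
have := spn_triangle (bT _ (inCb_iterT n.+1 k v_inCb)) (bT _ (w_inCb n.+1))
  (inCb_bounded (w_inCb n)).
move/le_trans; apply; rewrite w_eq addr0 /= dprodS -mulrA -addSnnS.
apply: le_trans (@T_lipschitz n _ _ (inCb_iterT n.+1 k v_inCb) (w_inCb n.+1)) _.
by rewrite ler_wpM2l.
Qed.

Lemma spn_sub_solutions w w' k n : solution w -> solution w' ->
  spn (w n \- w' n) <= dprod Delta n k * spn (w (n + k)%N \- w' (n + k)%N).
Proof.
move=> w_sol w'_sol; have [w_inCb _] := w_sol; have [w'_inCb _] := w'_sol.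
set v := w' (n + k)%N; have v_inCb : inCb v := w'_inCb _.
have := spn_iterT_sub_solution k n w_sol v_inCb.
rewrite spnBC [spn (v \- _)]spnBC => w_it.
have := spn_iterT_sub_solution k n w'_sol v_inCb.
rewrite [spn (v \- v)]spn_const ?mulr0 => [w'_it|x x']; last by rewrite /= !subrr.
have := spn_triangle (inCb_bounded (w_inCb n)) (inCb_bounded (inCb_iterT n k v_inCb))
  (inCb_bounded (w'_inCb n)).
by move/le_trans; apply; rewrite -[X in _ <= X]addr0 lerD.
Qed.

Lemma solution_unique w w' n : solution w -> solution w' ->
  (forall n, (fun k => dprod Delta n k.+1) @ \oo --> 0) ->
  (exists M, forall n, spn (w n) <= M) -> (exists M', forall n, spn (w' n) <= M') ->
  spn (w n \- w' n) = 0.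
Proof.
move=> w_sol w'_sol Delta_cvg [M wM] [M' w'M].
have [w_inCb _] := w_sol; have [w'_inCb _] := w'_sol.
have bw k := inCb_bounded (w_inCb k); have bw' k := inCb_bounded (w'_inCb k).
apply/le_anti; rewrite spn_ge0 ?andbT; last exact: boundedB.
have lim0 : (fun k => dprod Delta n k.+1 * (M + M')) @ \oo --> 0.
  by rewrite -(mul0r (M + M')); exact: cvgMr_tmp.
apply: (cvgr_to_ge lim0); apply: nearW => k.
rewrite (le_trans (spn_sub_solutions k.+1 n w_sol w'_sol)) //.
by rewrite ler_wpM2l ?dprod_ge0 // (le_trans (spnB _ _)) ?lerD.
Qed.

End lipschitz_chain.

Section existence.
Variables (R : realType) (E : topologicalType).
Variables (Delta gamma : nat -> R) (T : nat -> (E -> R) -> E -> R).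
Hypothesis Delta_ge0 : forall n, 0 <= Delta n.
Hypothesis T_inCb : forall n v, inCb v -> inCb (T n v).
Hypothesis T_lipschitz : forall n v1 v2, inCb v1 -> inCb v2 ->
  spn (T n v1 \- T n v2) <= Delta n * spn (v1 \- v2).
Hypothesis spn_T0 : forall n, spn (T n (fun _ => 0)) <= gamma n.

Let b n j := dprod Delta n j * gamma (n + j)%N.
Hypothesis b_summable : forall n, cvgn (series (b n)).

Let u n k := iterT T n k (fun _ => 0).
Let S n := limn (series (b n)).
Let tail n k := S n - series (b n) k.

Lemma inCb_u n k : inCb (u n k).
Proof. exact/inCb_iterT/inCb0. Qed.

Lemma b_ge0 n j : 0 <= b n j.
Proof.
rewrite mulr_ge0 ?dprod_ge0 // (le_trans _ (spn_T0 _)) // spn_ge0 //.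
exact/inCb_bounded/T_inCb/inCb0.
Qed.

Lemma spn_u_succ n k : spn (u n k.+1 \- u n k) <= b n k.
Proof.
elim: k n => [|k IHk] n; first by rewrite /u /= spn_subr0 /b dprod0 mul1r addn0.
apply: le_trans (T_lipschitz n (inCb_u n.+1 k.+1) (inCb_u n.+1 k)) _.
by rewrite /b dprodS -mulrA ler_wpM2l // -addSnnS.
Qed.

Lemma spn_u_le n k : spn (u n k) <= series (b n) k.
Proof.
elim: k => [|k IHk]; first by rewrite spn_const // /series /= big_geq.
have := spn_le_subD (inCb_bounded (inCb_u n k.+1)) (inCb_bounded (inCb_u n k)).
move/le_trans; apply.
by rewrite seriesS lerD ?spn_u_succ.
Qed.

Lemma series_b_le n k : series (b n) k <= S n.
Proof.
apply: (nondecreasing_cvgn_le _ (@b_summable n)).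
by apply: nondecreasing_series => j _ _; exact: b_ge0.
Qed.

Lemma tail_ge0 n k : 0 <= tail n k.
Proof. by rewrite subr_ge0 series_b_le. Qed.

Lemma cvg_tail n : tail n @ \oo --> 0.
Proof. by rewrite -(subrr (S n)); apply: cvgB => //; exact: cvg_cst. Qed.

Lemma cvg_tail2 n : (fun k => tail n k *+ 2) @ \oo --> 0.
Proof. by rewrite -(mul0rn _ 2); exact: cvgMn (cvg_tail n). Qed.

Section relative_value.
Variable x0 : E.

Let un n k x := u n k x - u n k x0.

Definition relative_value n x := limn (fun k => un n k x).

Lemma un_incr n x j : `|un n j.+1 x - un n j x| <= b n j.
Proof.
have -> : un n j.+1 x - un n j x = (u n j.+1 \- u n j) x - (u n j.+1 \- u n j) x0.
  by rewrite /un /=; ring.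
apply: le_trans (spn_u_succ n j); apply: normB_le_spn.
exact: boundedB (inCb_bounded (inCb_u n j.+1)) (inCb_bounded (inCb_u n j)).
Qed.

Lemma relative_value_near n x k : `|relative_value n x - un n k x| <= tail n k.
Proof. exact: lim_sub_le_tail (un_incr n x) (@b_summable n) k. Qed.

Lemma spn_relative_value_sub_u n k : spn (relative_value n \- u n k) <= tail n k *+ 2.
Proof.
apply: spn_le => [|x x' /=]; first by rewrite mulrn_wge0 ?tail_ge0.
have := relative_value_near n x k; have := relative_value_near n x' k.
rewrite /un !ler_norml => /andP[? ?] /andP[? ?]; lra.
Qed.

Lemma inCb_relative_value n : inCb (relative_value n).
Proof.
split.
  apply: (continuous_unif_approx (g := un n)) (cvg_tail n) => [k x|k x].
    by apply: cvgB; [exact: (inCb_u n k).1 | exact: cvg_cst].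
  exact: relative_value_near.
exists (S n) => x; have := relative_value_near n x 0.
by rewrite /un /tail /u /= subrr subr0 /series /= big_geq // subr0.
Qed.

Lemma spn_relative_value n : spn (relative_value n) <= S n.
Proof.
have lim_S : (fun k => tail n k *+ 2 + S n) @ \oo --> S n.
  by rewrite -[X in _ --> X]add0r; apply: cvgD; [exact: cvg_tail2 | exact: cvg_cst].
apply: (cvgr_to_ge lim_S); apply: nearW => k.
have := spn_le_subD (inCb_bounded (inCb_relative_value n)) (inCb_bounded (inCb_u n k)).
move/le_trans; apply; apply: lerD; first exact: spn_relative_value_sub_u.
exact: le_trans (spn_u_le n k) (series_b_le n k).
Qed.

Lemma relative_value_solution : solution T relative_value.
Proof.
split => [|n]; first exact: inCb_relative_value.
have bw m := inCb_bounded (inCb_relative_value m).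
have bT v : inCb v -> bounded (T n v) by move=> /(T_inCb n)/inCb_bounded.
have lim0 : (fun k => Delta n * (tail n.+1 k *+ 2) + tail n k.+1 *+ 2) @ \oo --> 0.
  rewrite -[X in _ --> X](addr0 0) -{1}(mulr0 (Delta n)).
  apply: cvgD; first exact: cvgMl_tmp (cvg_tail2 n.+1).
  by rewrite (cvg_shiftS (fun k => tail n k *+ 2)); exact: cvg_tail2.
apply/le_anti; rewrite spn_ge0 ?andbT; last exact/boundedB/bw/bT/inCb_relative_value.
apply: (cvgr_to_ge lim0); apply: nearW => k.
have u_inCb := inCb_u n.+1 k; have w_inCb := inCb_relative_value n.+1.
have := spn_triangle (bT _ w_inCb) (bT _ u_inCb) (bw n).
move/le_trans; apply; apply: lerD.
  apply: le_trans (T_lipschitz n w_inCb u_inCb) _.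
  by rewrite ler_wpM2l // spn_relative_value_sub_u.
by rewrite spnBC; exact: spn_relative_value_sub_u n k.+1.
Qed.

End relative_value.

Lemma exists_solution : exists w, solution T w /\ forall n, spn (w n) <= S n.
Proof.
(* The normalisation needs a base point; on an empty E every span vanishes. *)
have [[x0 _]|E0] := pselect (exists x : E, True).
  exists (relative_value x0).
  by split; [exact: relative_value_solution | exact: spn_relative_value].
exists (fun _ _ => 0); split; first by split => [n|n]; rewrite ?spn_void //; exact: inCb0.
move=> n; rewrite spn_void //; apply: le_trans (series_b_le n 0).
by rewrite /series /= big_geq.
Qed.

End existence.

Unset Implicit Arguments. Set Strict Implicit.

Theorem theorem2 (R : realType) (E : completePseudoMetricType R) (U : Type)
  (hE_haus : hausdorff_space E) (hE_sep : separable_sp E)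
  (Delta : nat -> R) (c : nat -> E -> U -> R) (T : nat -> (E -> R) -> (E -> R))
  (hDelta : forall n, 0 <= Delta n)
  (hc : forall n, exists M : R, forall x a, `|c n x a| <= M)
  (hT : forall n v, inCb v -> inCb (T n v))
  (h1 : forall n v1 v2, inCb v1 -> inCb v2 ->
          spn (T n v1 \- T n v2) <= Delta n * spn (v1 \- v2))
  (h2 : forall n, spn (T n (fun _ => 0)) <= spc (c n))
  (h3 : forall n, (fun k => dprod Delta n k.+1) @ \oo --> (0 : R))
  (h4 : forall n, cvgn (series (fun i => dprod Delta n i.+1 * spc (c (n + i.+1)%N)))) :
  exists w : nat -> E -> R,
    (forall n, inCb (w n)) /\
    (forall n, spn (T n (w n.+1) \- w n) = 0) /\
    (forall n, spn (w n) <=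
       spc (c n) + limn (series (fun i => dprod Delta n i.+1 * spc (c (n + i.+1)%N)))) /\
    (forall n k, (1 <= k)%N ->
       spn (iterT T n k (fun _ => 0) \- w n) <= dprod Delta n k * spn (w (n + k)%N)) /\
    ((exists M : R, forall n, spn (w n) <= M) ->
       forall wt : nat -> E -> R, (forall n, inCb (wt n)) ->
         (forall n, spn (T n (wt n.+1) \- wt n) = 0) ->
         (exists M : R, forall n, spn (wt n) <= M) ->
         forall n, spn (wt n \- w n) = 0).
Proof.
have b_cvg n : series (fun j => dprod Delta n j * spc (c (n + j)%N)) @ \oo -->
    spc (c n) + limn (series (fun i => dprod Delta n i.+1 * spc (c (n + i.+1)%N))).
  have := cvg_series_recl (f := fun j => dprod Delta n j * spc (c (n + j)%N)) (h4 n).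
  by rewrite dprod0 mul1r addn0.
have [w [w_sol w_le]] :=
  exists_solution (gamma := fun n => spc (c n)) hDelta hT h1 h2
    (fun n => cvgP _ (b_cvg n)).
have [w_inCb w_eq] := w_sol.
exists w; do 2!split => //; split.
  by move=> n; rewrite -(cvg_lim _ (b_cvg n)).
split=> [n k _|w_bd wt wt_inCb wt_eq wt_bd n].
  have := spn_iterT_sub_solution hDelta hT h1 k n w_sol (inCb0 R E).
  by rewrite [spn (_ \- w (n + k)%N)]spnBC spn_subr0.
have wt_sol : solution T wt by split.
by apply: (solution_unique hDelta hT h1 n wt_sol w_sol).
Qed.
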